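(* Assume $D$ has at least one arc. The largest number of nodes $|W|$ over subsystem states $\psi^A_W$ belonging to $M_E$ equals the number of nodes of the largest transmission block of $D$; if $D$ has no transmission block, this maximum equals $2$.
   Context: $D=(V,A)$ is a directed graph on $V=\{1,\dots,N\}$ with rates $T_{ij}\ge0$, $T_{ij}>0$ iff $(j,i)\in A$, $T_{ii}=0$. A subsystem state is a pair $(W,A)$ with $W\subseteq V$ nonempty and $A:W\to\{S,I,R\}$, written $\psi^A_W$; $S_i$, $I_i$ denote the single-node states, and for $n\notin W$, $\psi^A_WI_n$ denotes the state on $W\cup\{n\}$ agreeing with $A$ on $W$ and with $n$ in state $I$. For $k\in W$, $h^X_k(\psi^A_W)$ is the state obtained by changing the state of $k$ to $X$. $\mathrm{IN}(X)$ is the set of nodes from which some member of $X$ is reachable by a directed path; for disjoint nonempty $X,Y,Z$, $f_E(X,Y,Z)=1$ iff $\mathrm{IN}(X)\cap\mathrm{IN}(Y)=\emptyset$ in $D-Z$, else $0$; by convention $f_E(\{n\},\emptyset,\{k\})=0$. Induced set: for a state $\psi^A_W$ with $A:W\to\{S,I\}$, the states it induces are (i) $\psi^A_W$ itself and $h^S_k(\psi^A_W)$ for each $k\in W$ with $A_k=I$ such that $T_{kn}>0$ for some $n\in W$ with $A_n=I$; (ii) for each $k\in W$ and $n\in V\setminus W$ with $T_{kn}>0$: if $f_E(\{n\},W\setminus\{k\},\{k\})=0$, the state $h^S_k(\psi^A_W)I_n$; if it equals $1$, the states $h^S_k(\psi^A_W)$, $S_kI_n$ and $S_k$. $M_E$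 is the smallest set of subsystem states containing $S_i$ and $I_i$ for all $i\in V$ and closed under taking induced states (these are exactly the states appearing in the exact closed moment equations for Markovian SIR dynamics obtained using the closure $\langle\psi^A_WI_n\rangle=\langle\psi^A_W\rangle\langle S_kI_n\rangle/\langle S_k\rangle$ wherever $f_E=1$). For $W\subseteq V$, $D[W]$ is the subgraph with node set $W$ and all arcs of $D$ with both endpoints in $W$. A graph is biconnected if it has at least three vertices, is connected, and stays connected after deleting any single vertex. $D[W]$ is a directed sub-block if some node of $W$ is reachable by a directed path within $D[W]$ from every other node of $W$, and the underlying undirected graph of $D[W]$ is biconnected. $D[W]$ is a transmission block if it is a directed sub-block and there is no $U\supsetneq W$ with $D[U]$ a directed sub-block. *)

From HB Require Import structures.
From mathcomp Require Import all_boot.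
Set Implicit Arguments. Unset Strict Implicit. Unset Printing Implicit Defensive.

Inductive sir := Sus | Inf | Rec.
Definition sir_code (x : sir) : nat := match x with Sus => 0 | Inf => 1 | Rec => 2 end.
Definition sir_decode (n : nat) : option sir :=
  match n with 0 => Some Sus | 1 => Some Inf | 2 => Some Rec | _ => None end.
Lemma sir_codeK : pcancel sir_code sir_decode. Proof. by case. Qed.
HB.instance Definition _ := Equality.copy sir (pcan_type sir_codeK).

Section Graph.
Variable N : nat.
(* The digraph D on V = 'I_N: [arc j i] means (j,i) is an arc of D,
   i.e. T_{ij} > 0 (node j can infect node i). *)
Variable arc : rel 'I_N.

(* A subsystem state psi^A_W: the value None means "not in W". *)
Definition state := {ffun 'I_N -> option sir}.

Definition supp (psi : state) : {set 'I_N} := [set x | psi x != None].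

Definition no_R (psi : state) : bool := [forall x, psi x != Some Rec].

Definition single (i : 'I_N) (s : sir) : state :=
  [ffun x => if x == i then Some s else None].

Definition SI (k n : 'I_N) : state :=
  [ffun x => if x == k then Some Sus else if x == n then Some Inf else None].

Definition hset (X : sir) (k : 'I_N) (psi : state) : state :=
  [ffun x => if x == k then Some X else psi x].

Definition addI (n : 'I_N) (psi : state) : state :=
  [ffun x => if x == n then Some Inf else psi x].

Definition arc_minus (Z : {set 'I_N}) : rel 'I_N :=
  [rel u v | [&& arc u v, u \notin Z & v \notin Z]].

Definition IN (Z X : {set 'I_N}) : {set 'I_N} :=
  [set u | (u \notin Z) && [exists x in X, connect (arc_minus Z) u x]].

Definition fE (X Y Z : {set 'I_N}) : bool := [disjoint IN Z X & IN Z Y].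

(* f_E({n}, W\{k}, {k}), with the convention f_E({n}, emptyset, {k}) = 0 *)
Definition fE_nWk (n : 'I_N) (W : {set 'I_N}) (k : 'I_N) : bool :=
  if W :\ k == set0 then false else fE [set n] (W :\ k) [set k].

Definition induced (psi psi' : state) : Prop :=
  no_R psi /\
  [\/ psi' = psi,
      (exists k n, [/\ psi k = Some Inf, psi n = Some Inf, arc n k &
                       psi' = hset Sus k psi])
    | (exists k n, [/\ k \in supp psi, n \notin supp psi, arc n k &
          (if fE_nWk n (supp psi) k
           then [\/ psi' = hset Sus k psi, psi' = SI k n | psi' = single k Sus]
           else psi' = addI n (hset Sus k psi))])].

Inductive ME : state -> Prop :=
  | ME_S (i : 'I_N) : ME (single i Sus)
  | ME_I (i : 'I_N) : ME (single i Inf)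
  | ME_step (psi psi' : state) : ME psi -> induced psi psi' -> ME psi'.

Definition sub_arc (W : {set 'I_N}) : rel 'I_N :=
  [rel u v | [&& arc u v, u \in W & v \in W]].

Definition und_arc (W : {set 'I_N}) : rel 'I_N :=
  [rel u v | sub_arc W u v || sub_arc W v u].

Definition und_connected (W : {set 'I_N}) : bool :=
  [forall u in W, forall v in W, connect (und_arc W) u v].

Definition biconnected (W : {set 'I_N}) : bool :=
  [&& 2 < #|W|, und_connected W & [forall x in W, und_connected (W :\ x)]].

Definition directed_subblock (W : {set 'I_N}) : bool :=
  [exists r in W, forall u in W, connect (sub_arc W) u r] && biconnected W.

Definition transmission_block (W : {set 'I_N}) : bool :=
  directed_subblock W &&
  [forall U : {set 'I_N}, (W \proper U) ==> ~~ directed_subblock U].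

End Graph.

From HB Require Import structures.
From mathcomp Require Import all_boot.
Set Implicit Arguments. Unset Strict Implicit. Unset Printing Implicit Defensive.

(* Call a node set a weak block if it has at least two nodes, stays connected
   (as an undirected graph) after deleting any one node, and has a node that all
   of its nodes reach inside it; directed sub-blocks are exactly the weak blocks
   with at least three nodes.

   Upper bound: every support in M_E has at most one node or lies in a weak
   block.  A step that adds a node n with an arc n -> k to a support W needs
   f_E = 0, i.e. a node u reaching both n and W \ k while avoiding k.  Following
   these paths until they return to the weak block U containing W produces an
   ear of U (one or two directed paths ending in U), and adding an ear keeps U a
   weak block.

   Lower bound: in a directed sub-block U with root r, grow the support from S_r.
   While W <> U there is an arc n -> t from U \ W into W with f_E = 0: otherwise
   the nodes of U \ W that reach t through U \ W would be closed under adjacency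
   in U - t yet miss W \ t, contradicting the connectivity of U - t.  Without
   transmission blocks, a single arc already gives a state on two nodes. *)

Section Blocks.
Variables (N : nat) (arc : rel 'I_N).
Local Notation V := 'I_N.

Definition adj : rel V := fun u v => arc u v || arc v u.

Lemma adj_sym : symmetric adj.
Proof. by move=> u v; rewrite /adj orbC. Qed.

Lemma und_arcE S u v : und_arc arc S u v = [&& adj u v, u \in S & v \in S].
Proof.
by rewrite /und_arc /sub_arc /adj /=; case: (arc u v); case: (arc v u); case: (u \in S);
  case: (v \in S).
Qed.

Lemma und_arc_sym S : symmetric (und_arc arc S).
Proof. by move=> u v; rewrite !und_arcE adj_sym; case: (u \in S); rewrite ?andbT ?andbF. Qed.

Lemma connect_und_sym S : connect_sym (und_arc arc S).
Proof. exact/sym_connect_sym/und_arc_sym. Qed.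

Lemma connect_und_sub (S S' : {set V}) u v : S \subset S' ->
  connect (und_arc arc S) u v -> connect (und_arc arc S') u v.
Proof.
move=> sSS'; apply: connect_sub => x y; rewrite !und_arcE => /and3P[xy xS yS].
by apply: connect1; rewrite und_arcE xy !(subsetP sSS').
Qed.

Lemma connect_sub_arc_sub (S S' : {set V}) u v : S \subset S' ->
  connect (sub_arc arc S) u v -> connect (sub_arc arc S') u v.
Proof.
move=> sSS'; apply: connect_sub => x y /and3P[xy xS yS].
by apply: connect1; rewrite /sub_arc /= xy !(subsetP sSS').
Qed.

Lemma path_connect_last (e : rel V) x p y : path e x p -> y \in x :: p ->
  connect e y (last x p).
Proof.
move=> pxp yxp; case/splitPl: p / yxp pxp => p1 p2 ly.
by rewrite cat_path last_cat -ly => /andP[_ p2y]; apply/connectP; exists p2.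
Qed.

Lemma connect_sub_arc_path (S : {set V}) x p y : path arc x p -> {subset x :: p <= S} ->
  y \in x :: p -> connect (sub_arc arc S) y (last x p).
Proof.
move=> pxp xpS; apply: path_connect_last; apply: (sub_in_path (P := [in S])) pxp.
  by move=> u v uS vS uv; rewrite /sub_arc /= uv uS vS.
exact/allP.
Qed.

Lemma connect_und_path (S : {set V}) x p : path adj x p -> {subset x :: p <= S} ->
  connect (und_arc arc S) x (last x p).
Proof.
move=> pxp xpS; apply: path_connect_last (mem_head _ _).
apply: (sub_in_path (P := [in S])) pxp; last exact/allP.
by move=> u v uS vS uv; rewrite und_arcE uv uS vS.
Qed.

Lemma und_connectedE (S : {set V}) u v : und_connected arc S -> u \in S -> v \in S ->
  connect (und_arc arc S) u v.
Proof. by move=> /forall_inP/(_ u) H uS vS; move/forall_inP: (H uS); apply. Qed.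

Lemma und_connected_star (S : {set V}) c : c \in S ->
  (forall y, y \in S -> connect (und_arc arc S) y c) -> und_connected arc S.
Proof.
move=> cS yc; apply/forall_inP => u uS; apply/forall_inP => v vS.
by apply: connect_trans (yc u uS) _; rewrite connect_und_sym; apply: yc.
Qed.

Definition two_connected (U : {set V}) := forall x, und_connected arc (U :\ x).

Lemma two_connected_ear (U : {set V}) a b e :
  two_connected U -> a \in U -> b \in U -> a != b -> uniq e ->
  all (fun y => y \notin U) e -> path adj a (rcons e b) ->
  two_connected (U :|: [set y in e]).
Proof.
move=> tcU aU bU ab ue /allP eU pe x; set S := _ :\ x.
have inS z : (z \in U) || (z \in e) -> z != x -> z \in S by move=> zUe zx; rewrite !inE zx.
have toU z d : z \in U -> d \in U -> z != x -> d != x -> connect (und_arc arc S) z d.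
  move=> zU dU zx dx; apply: connect_und_sub (und_connectedE (tcU x) _ _);
    by rewrite ?setSD ?subsetUl // !inE ?zx ?dx.
have aNe : a \notin e by apply: contraTN aU => /eU.
have bNe : b \notin e by apply: contraTN bU => /eU.
have uab : uniq (a :: rcons e b) by rewrite /= mem_rcons inE negb_or ab aNe rcons_uniq bNe ue.
pose c := if x == a then b else a.
have [cU cx] : c \in U /\ c != x.
  by rewrite /c; case: (eqVneq x a) => [->|]; rewrite ?aU ?bU // eq_sym.
apply: (und_connected_star (inS c _ cx)) => [|y]; first by rewrite cU.
rewrite !inE => /andP[yx /orP[yU|ye]]; first exact: toU.
have [l1 [l2 el]] : exists l1 l2, e = l1 ++ y :: l2 by case/splitPr: ye => l1 l2; exists l1, l2.
have {}inS z : z \in a :: rcons e b -> z != x -> z \in S.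
  move=> zp; apply: inS; move: zp; rewrite inE mem_rcons inE.
  by case/or3P=> [/eqP->|/eqP->|->]; rewrite ?aU ?bU ?orbT.
move: uab pe inS; rewrite el rcons_cat -cat_cons cat_uniq cat_path.
move=> /and3P[_ disj _] /andP[p1 /= /andP[ly p2]] inS.
have [xl1|xNl1] := boolP (x \in a :: l1).
- have xNl2 : x \notin y :: rcons l2 b by apply: contraNN disj => xl2; apply/hasP; exists x.
  have := connect_und_path (S := S) p2; rewrite last_rcons => yb.
  apply: connect_trans (yb _) (toU _ _ bU cU _ cx).
    move=> z zl2; apply: inS; last by apply: contraNneq xNl2 => <-.
    by rewrite -cat_cons mem_cat zl2 orbT.
  by apply: contraNneq xNl2 => <-; rewrite inE mem_rcons mem_head orbT.
- have pay : path adj a (rcons l1 y) by rewrite rcons_path p1 ly.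
  have := connect_und_path (S := S) pay; rewrite last_rcons connect_und_sym => ya.
  have ax : a != x by apply: contraNneq xNl1 => <-; apply: mem_head.
  apply: connect_trans (ya _) (toU _ _ aU cU ax cx) => z.
  rewrite -rcons_cons mem_rcons in_cons => /orP[/eqP->|zl1].
    by apply: inS yx; rewrite -cat_cons mem_cat mem_head orbT.
  by apply: inS; [rewrite -cat_cons mem_cat zl1 | apply: contraNneq xNl1 => <-].
Qed.

Definition rooted (U : {set V}) :=
  [exists r in U, forall u in U, connect (sub_arc arc U) u r].

Definition weak_block (U : {set V}) := [/\ 1 < #|U|, two_connected U & rooted U].

Lemma arc_adj : subrel arc adj.
Proof. by move=> x y xy; rewrite /adj xy. Qed.

Lemma weak_block_arc k n : arc n k -> n != k -> weak_block [set k; n].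
Proof.
move=> nk nNk; split; first by rewrite cards2 eq_sym nNk.
  move=> x; apply/forall_inP => u uS; apply/forall_inP => v vS.
  have [->|uv] := eqVneq u v; first exact: connect0.
  apply: connect1; rewrite und_arcE uS vS andbT.
  move: uS vS uv; rewrite !inE => /andP[_ /orP[]/eqP-> /andP[_ /orP[]/eqP->]];
    by rewrite ?eqxx // /adj nk ?orbT.
apply/exists_inP; exists k; first by rewrite !inE eqxx.
apply/forall_inP => u; rewrite !inE => /orP[]/eqP->; first exact: connect0.
by apply: connect1; rewrite /sub_arc /= nk !inE !eqxx orbT.
Qed.

Lemma weak_block_ear (U : {set V}) a b e :
  weak_block U -> a \in U -> b \in U -> a != b -> uniq e ->
  all (fun y => y \notin U) e -> path adj a (rcons e b) ->
  {in e, forall y, exists2 t, t \in U & connect (sub_arc arc (U :|: [set y in e])) y t} ->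
  weak_block (U :|: [set y in e]).
Proof.
move=> [U2 tcU /exists_inP[r rU /forall_inP toR]] aU bU ab ue eU pe eToU.
have sU : U \subset U :|: [set y in e] by apply: subsetUl.
split; first exact: leq_trans U2 (subset_leq_card sU).
  exact: two_connected_ear pe.
apply/exists_inP; exists r; first by rewrite inE rU.
apply/forall_inP => y; rewrite !inE => /orP[yU|ye].
  exact: connect_sub_arc_sub sU (toR y yU).
have [t tU yt] := eToU y ye.
exact: connect_trans yt (connect_sub_arc_sub sU (toR t tU)).
Qed.

Lemma weak_block_arc_ear (U : {set V}) z k l :
  weak_block U -> z \in U -> k \in U -> z != k -> uniq l ->
  all (fun y => y \notin U) l -> path arc z (rcons l k) ->
  weak_block (U :|: [set y in l]).
Proof.
move=> bU zU kU zk ul lU pl; apply: weak_block_ear zk ul lU (sub_path arc_adj pl) _ => //.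
move=> y yl; exists k => //.
have := connect_sub_arc_path (S := U :|: [set y in l]) (y := y) pl.
rewrite last_rcons; apply; last by rewrite !(inE, mem_rcons) yl !orbT.
move=> t; rewrite inE mem_rcons inE => /or3P[]/=; last by rewrite !inE => ->; rewrite orbT.
  by move/eqP->; rewrite inE zU.
by move/eqP->; rewrite inE kU.
Qed.

Lemma weak_block_fork_ear (U : {set V}) s k z q l :
  weak_block U -> s \in U -> k \in U -> s != k ->
  uniq (q ++ z :: l) -> all (fun y => y \notin U) (q ++ z :: l) ->
  path arc z (rcons q s) -> path arc z (rcons l k) ->
  weak_block (U :|: [set y in q ++ z :: l]).
Proof.
move=> bU sU kU sk uql qlU pq pl.
set e := rev q ++ z :: l.
have eE : [set y in q ++ z :: l] = [set y in e].
  by apply/setP => y; rewrite !inE !mem_cat mem_rev.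
rewrite eE; apply: weak_block_ear sk _ _ _ _ => //.
- by rewrite (perm_uniq (_ : perm_eq _ (q ++ z :: l))) // perm_cat2r perm_rev.
- by rewrite /e all_cat all_rev -all_cat.
- have psqz : path adj s (rcons (rev q) z).
    have := rev_path adj z (rcons q s); rewrite last_rcons belast_rcons rev_cons => ->.
    by apply: sub_path pq => x y xy; rewrite /adj xy orbT.
  by rewrite /e rcons_cat /= -cat_rcons cat_path psqz last_rcons (sub_path arc_adj pl).
have inUe y : y \in q ++ z :: l -> y \in U :|: [set y in e].
  by rewrite -eE !inE => ->; rewrite orbT.
move=> y ye; have zql : z \in q ++ z :: l by rewrite mem_cat mem_head orbT.
move: (ye); rewrite mem_cat mem_rev => /orP[yq|yzl].
  exists s => //; have := connect_sub_arc_path (S := U :|: [set y in e]) (y := y) pq.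
  rewrite last_rcons; apply; last by rewrite !(inE, mem_rcons) yq !orbT.
  move=> t; rewrite inE mem_rcons inE => /or3P[/eqP->|/eqP->|tq]; first exact: inUe.
    by rewrite inE sU.
  by apply: inUe; rewrite mem_cat tq.
exists k => //; have := connect_sub_arc_path (S := U :|: [set y in e]) (y := y) pl.
rewrite last_rcons; apply; last by rewrite -rcons_cons mem_rcons inE yzl orbT.
move=> t; rewrite -rcons_cons mem_rcons inE => /orP[/eqP->|tl]; first by rewrite inE kU.
by apply: inUe; rewrite mem_cat tl orbT.
Qed.

Lemma arc_minus_arc (K : {set V}) : subrel (arc_minus arc K) arc.
Proof. by move=> x y /and3P[]. Qed.

Lemma path_arc_minus_notin (K : {set V}) x p :
  path (arc_minus arc K) x p -> all (fun y => y \notin K) p.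
Proof. by elim: p x => //= y p IHp x /andP[/and3P[_ _ ->] /IHp]. Qed.

Lemma mem_IN (K X : {set V}) u x : u \notin K -> x \in X ->
  connect (arc_minus arc K) u x -> u \in IN arc K X.
Proof. by move=> uK xX ux; rewrite inE uK; apply/exists_inP; exists x. Qed.

Lemma IN_sub (K X Y : {set V}) : X \subset Y -> IN arc K X \subset IN arc K Y.
Proof.
move=> sXY; apply/subsetP => u; rewrite !inE => /andP[-> /exists_inP[x xX ux]].
by apply/exists_inP; exists x; rewrite ?(subsetP sXY).
Qed.

Lemma path_split_last (e : rel V) (P : pred V) x s : has P (x :: s) -> path e x s ->
  exists z l2, [/\ P z, all (predC P) l2, path e z l2, last z l2 = last x s &
                   exists l1, x :: s = l1 ++ z :: l2].
Proof.
elim: s x => [|y s IHs] x.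
  by rewrite /= orbF => Px _; exists x, [::]; split => //; exists [::].
move=> /= Pxs /andP[xy pys]; have [Pys|nPys] := boolP (has P (y :: s)).
  have [z [l2 [Pz l2P pz lz [l1 e1]]]] := IHs y Pys pys.
  by exists z, l2; split => //; exists (x :: l1); rewrite e1.
have Px : P x by case/orP: Pxs => // Pys; case/negP: nPys.
exists x, (y :: s); split => //=; [by rewrite -all_predC in nPys | by rewrite xy | by exists [::]].
Qed.

Lemma weak_block_fork_extend (U : {set V}) k z l :
  weak_block U -> k \in U -> z \notin U -> z \in IN arc [set k] (U :\ k) ->
  uniq (z :: l) -> all (fun y => y \notin U) l ->
  {in l, forall y, y \notin IN arc [set k] (U :\ k)} -> path arc z (rcons l k) ->
  exists2 U', weak_block U' & U :|: [set y in z :: l] \subset U'.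
Proof.
move=> bU kU zU; rewrite inE => /andP[zk /exists_inP[w wUk /connectP[q0 pq0 wq0]]].
move=> uzl lU lNIN pl; case: (shortenP pq0) wq0 => q1 pq1 uq1 _ wq1.
have hq1 : has [in U] q1.
  move: wUk; rewrite inE => /andP[_ wU]; apply/hasP; exists w => //.
  by move: (mem_last z q1); rewrite -wq1 inE => /orP[/eqP zw|//]; rewrite -zw wU in zU.
move: pq1 uq1; case/split_find: _ / hq1 => s q rest sU qNU.
rewrite cat_path -cat_cons cat_uniq => /andP[pqs _] /andP[uzqs _].
have := path_arc_minus_notin pqs; rewrite all_rcons inE => /andP[sk qk].
have qIN y : y \in q -> y \in IN arc [set k] (U :\ k).
  move=> yq; apply: (mem_IN (x := s)); rewrite ?inE ?sk ?sU //.
    by have := allP qk y yq; rewrite inE.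
  have := path_connect_last pqs (y := y); rewrite last_rcons; apply.
  by rewrite !(inE, mem_rcons) yq !orbT.
have [U' bU' sU'] : exists2 U', weak_block U' & U :|: [set y in q ++ z :: l] \subset U'.
  exists (U :|: [set y in q ++ z :: l]) => //.
  apply: weak_block_fork_ear sU kU sk _ _ _ pl => //.
  - rewrite cat_uniq uzl andbT; move: uzqs; rewrite /= rcons_uniq mem_rcons inE negb_or.
    case/and3P=> /andP[_ zq] _ ->; rewrite /= negb_or zq.
    by apply/hasPn => y yl; exact: contraNN (qIN y) (lNIN y yl).
  - apply/allP => y; rewrite mem_cat inE => /or3P[yq|/eqP->//|yl]; last exact: (allP lU).
    by apply: contraNN qNU => yU; apply/hasP; exists y.
  - by apply: sub_path pqs; apply: arc_minus_arc.
exists U' => //; apply: subset_trans sU'; apply: setUS; apply/subsetP => y.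
by rewrite !in_set mem_cat => ->; rewrite orbT.
Qed.

Lemma weak_block_extend (U : {set V}) k n u :
  weak_block U -> k \in U -> n \notin U -> arc n k ->
  u \in IN arc [set k] [set n] -> u \in IN arc [set k] (U :\ k) ->
  exists2 U', weak_block U' & n |: U \subset U'.
Proof.
move=> bU kU nU nk; rewrite [u \in IN _ _ [set n]]inE.
move=> /andP[uk /exists_inP[_ /set1P-> /connectP[p0 pp0 np0]]] uIN.
case: (shortenP pp0) np0 => p pp up _ np.
set INU := IN arc [set k] (U :\ k).
(* z is the last node of the path that still reaches U \ k avoiding k; the nodes
   after it lie outside U, so z, l, k is (the tail of) an ear. *)
have [|z [l [zIN lNIN pzl lzl [l1 upE]]]] := path_split_last (P := [in INU]) _ pp.
  by rewrite /= uIN.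
have uzl : uniq (z :: l) by move: up; rewrite upE cat_uniq => /and3P[].
have lk y : y \in l -> y != k.
  move=> yl; have : y \in u :: p by rewrite upE mem_cat inE yl !orbT.
  rewrite inE => /orP[/eqP->|yp]; first by move: uk; rewrite inE.
  by have := allP (path_arc_minus_notin pp) y yp; rewrite inE.
have lU : all (fun y => y \notin U) l.
  apply/allP => y yl; apply: contraNN (allP lNIN y yl) => yU.
  by apply: (mem_IN (x := y)); rewrite ?inE ?yU ?lk.
have pzlk : path arc z (rcons l k).
  by rewrite rcons_path lzl -np nk andbT; apply: sub_path pzl; apply: arc_minus_arc.
have nzl : n \in z :: l by rewrite np -lzl mem_last.
have [zU|zNU] := boolP (z \in U).
  exists (U :|: [set y in l]); last first.
    rewrite setUC; apply: setUS; rewrite sub1set inE.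
    by move: nzl; rewrite inE => /orP[/eqP nz|//]; rewrite nz zU in nU.
  have zk : z != k by move: zIN; rewrite !inE => /andP[].
  by case/andP: uzl => _ ul; apply: weak_block_arc_ear bU zU kU zk ul lU pzlk.
have [U' bU' sU'] := weak_block_fork_extend bU kU zNU zIN uzl lU (fun y => allP lNIN y) pzlk.
exists U' => //; apply: subset_trans sU'; rewrite setUC; apply: setUS.
by rewrite sub1set inE nzl.
Qed.

Lemma fE_nWkP n (W : {set V}) k :
  reflect (W :\ k = set0 \/
           exists2 u, u \in IN arc [set k] [set n] & u \in IN arc [set k] (W :\ k))
          (~~ fE_nWk arc n W k).
Proof.
rewrite /fE_nWk /fE; case: eqP => [->|/eqP Wk]; first by left; left.
rewrite -setI_eq0; apply: (iffP (set0Pn _)) => [[u]|[/eqP|[u uN uW]]].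
- by rewrite inE => /andP[uN uW]; right; exists u.
- by rewrite (negbTE Wk).
- by exists u; rewrite inE uN.
Qed.

Definition in_weak_block (W : {set V}) := #|W| <= 1 \/ exists2 U, weak_block U & W \subset U.

Lemma in_weak_block_grow (W : {set V}) k n :
  in_weak_block W -> k \in W -> n \notin W -> arc n k -> ~~ fE_nWk arc n W k ->
  in_weak_block (n |: W).
Proof.
move=> WU kW nW nk /fE_nWkP[Wk|[u uN uW]]; right.
  have nNk : n != k by apply: contraNneq nW => ->.
  exists [set k; n]; first exact: weak_block_arc.
  apply/subsetP => y; rewrite !inE => /orP[->|yW]; rewrite ?orbT //.
  have [//|yk] := eqVneq y k.
  have : y \in W :\ k by rewrite !inE yk yW.
  by rewrite Wk inE.
have [U bU sWU] : exists2 U, weak_block U & W \subset U.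
  case: WU => // W1; move: uW; rewrite inE => /andP[_ /exists_inP[x]].
  rewrite !inE => /andP[xk xW] _; have : #|[set k; x]| <= #|W|.
    by apply: subset_leq_card; rewrite subUset !sub1set kW xW.
  by rewrite cards2 eq_sym xk => /leq_trans/(_ W1).
have [nU|nNU] := boolP (n \in U).
  by exists U => //; rewrite subUset sub1set nU.
have uU := subsetP (IN_sub _ (setSD _ sWU)) u uW.
have [U' bU' sU'] := weak_block_extend bU (subsetP sWU k kW) nNU nk uN uU.
by exists U' => //; apply: subset_trans sU'; apply: setUS.
Qed.

Lemma supp_single (i : V) s : supp (single i s) = [set i].
Proof. by apply/setP => x; rewrite !inE ffunE; case: (x == i). Qed.

Lemma supp_SI (k n : V) : supp (SI k n) = [set k; n].
Proof. by apply/setP => x; rewrite !inE ffunE; case: (x == k); case: (x == n). Qed.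

Lemma supp_hset X (k : V) (psi : state N) : supp (hset X k psi) = k |: supp psi.
Proof. by apply/setP => x; rewrite !inE ffunE; case: (x == k). Qed.

Lemma supp_addI (n : V) (psi : state N) : supp (addI n psi) = n |: supp psi.
Proof. by apply/setP => x; rewrite !inE ffunE; case: (x == n). Qed.

Lemma ME_no_R (psi : state N) : ME arc psi -> no_R psi.
Proof.
have no_R_hset k (p : state N) : no_R p -> no_R (hset Sus k p).
  by move=> /forallP pR; apply/forallP => x; rewrite ffunE; case: (x == k) => //; apply: pR.
have no_R_single i s : s != Rec -> no_R (single i s).
  by move=> sR; apply/forallP => x; rewrite ffunE; case: (x == i).
elim=> [i|i|p p' _ _ [pR [->|[k [n [_ _ _ ->]]]|[k [n [_ _ _]]]]]];
  rewrite ?no_R_single ?no_R_hset //.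
case: fE_nWk => [[]->|->]; rewrite ?no_R_hset ?no_R_single //.
  by apply/forallP => x; rewrite ffunE; case: (x == k); case: (x == n).
apply/forallP => x; rewrite ffunE; case: (x == n) => //; exact: (forallP (no_R_hset k p pR)).
Qed.

Lemma supp_ME_in_weak_block (psi : state N) : ME arc psi -> in_weak_block (supp psi).
Proof.
have in_weak_block_single i s : in_weak_block (supp (single i s)) by left; rewrite supp_single cards1.
elim=> [i|i|p p' _ IHp [_ [->//|[k [n [pk _ _ ->]]]|[k [n [kp np nk p'E]]]]]] //.
  by rewrite supp_hset (setUidPr _) // sub1set inE pk.
have kpE : k |: supp p = supp p by apply/setUidPr; rewrite sub1set.
case: ifP p'E => [_ [->|->|->]|/negbT fE0 ->] //.
- by rewrite supp_hset kpE.
- right; exists [set k; n]; rewrite ?supp_SI //; apply: weak_block_arc nk _.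
  by apply: contraNneq np => ->.
by rewrite supp_addI supp_hset kpE; apply: in_weak_block_grow IHp kp np nk fE0.
Qed.

Definition enters (X : {set V}) (y t : V) :=
  [exists n0 in X, arc n0 t && connect (sub_arc arc X) y n0].

Lemma connect_sub_arc_minus (S : {set V}) t a b : t \notin S ->
  connect (sub_arc arc S) a b -> connect (arc_minus arc [set t]) a b.
Proof.
move=> tS; apply: connect_sub => x y /and3P[xy xS yS]; apply: connect1.
by rewrite /arc_minus /= xy !inE /=; apply/andP; split; apply: contraNneq tS => <-.
Qed.

Lemma enters_first (U W : {set V}) r y : r \in W -> W \subset U ->
  connect (sub_arc arc U) y r -> y \in U :\: W -> exists2 t, t \in W & enters (U :\: W) y t.
Proof.
move=> rW sWU /connectP[p]; elim: p y => [|z p IHp] y /=; first by move=> _ ry; rewrite inE -ry rW.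
move=> /andP[/and3P[yz yU zU] pz] rE yX; have [zW|zNW] := boolP (z \in W).
  by exists z => //; apply/exists_inP; exists y => //; rewrite yz connect0.
have zX : z \in U :\: W by rewrite inE zNW zU.
have [t tW /exists_inP[n0 n0X /andP[n0t zn0]]] := IHp z pz rE zX.
exists t => //; apply/exists_inP; exists n0; rewrite // n0t /=.
by apply: connect_trans zn0; apply: connect1; rewrite /sub_arc /= yz yX zX.
Qed.

Section Growth.
Variables (U W : {set V}) (r : V).
Hypotheses (tcU : two_connected U) (rW : r \in W) (sWU : W \subset U).
Hypothesis toR : forall u, u \in U -> connect (sub_arc arc U) u r.
Local Notation X := (U :\: W).

Lemma enters_und_closed t : t \in W ->
  (forall n u, n \in X -> arc n t -> u \in IN arc [set t] [set n] ->
     u \notin IN arc [set t] (W :\ t)) ->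
  forall a b, a \in X -> enters X a t -> und_arc arc (U :\ t) a b ->
  (b \in X) && enters X b t.
Proof.
move=> tW noPair a b aX /exists_inP[na naX /andP[nat ana]].
rewrite und_arcE !in_setD1 => /and3P[ab _ /andP[bt bU]].
have Xt y : y \in X -> y \notin [set t].
  by rewrite !inE => /andP[yW _]; apply: contraNneq yW => ->.
have aNt := Xt a aX.
have tNX : t \notin X by rewrite inE tW.
have Xam y z : connect (sub_arc arc X) y z -> connect (arc_minus arc [set t]) y z.
  exact: connect_sub_arc_minus.
have aINna : a \in IN arc [set t] [set na].
  exact: mem_IN aNt (set11 na) (Xam _ _ ana).
have aNINW := noPair na a naX nat aINna.
have bNt : b \notin [set t] by rewrite inE.
have [bW|bNW] := boolP (b \in W).
  have bWt : b \in W :\ t by rewrite !inE bt bW.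
  exfalso; case/orP: ab => [ab|ba].
    move/negP: aNINW; apply; apply: (mem_IN aNt bWt).
    by apply: connect1; rewrite /arc_minus /= ab aNt.
  have bINna : b \in IN arc [set t] [set na].
    apply: (mem_IN bNt (set11 na) (connect_trans _ (Xam _ _ ana))).
    by apply: connect1; rewrite /arc_minus /= ba aNt bNt.
  by move/negP: (noPair na b naX nat bINna); apply; exact: (mem_IN bNt bWt (connect0 _ _)).
have bX : b \in X by rewrite inE bNW bU.
rewrite bX /=; case/orP: ab => [ab|ba]; last first.
  apply/exists_inP; exists na; rewrite // nat /=.
  by apply: connect_trans ana; apply: connect1; rewrite /sub_arc /= ba bX aX.
have [t' t'W /exists_inP[nb nbX /andP[nbt' bnb]]] := enters_first rW sWU (toR bU) bX.
have [<-|t't] := eqVneq t' t; first by apply/exists_inP; exists nb; rewrite ?nbt'.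
exfalso; move/negP: aNINW; apply; apply: (mem_IN (x := t') aNt); first by rewrite !inE t't t'W.
apply: connect_trans (connect1 _) (connect_trans (Xam _ _ bnb) (connect1 _)).
  by rewrite /arc_minus /= ab aNt bNt.
by rewrite /arc_minus /= nbt' (Xt _ nbX) !inE t't.
Qed.

Lemma exists_growth_arc x0 : x0 \in X ->
  exists n k, [/\ n \in X, k \in W, arc n k & ~~ fE_nWk arc n W k].
Proof.
move=> x0X; have x0U : x0 \in U by move: x0X; rewrite inE => /andP[].
have [t tW x0t] := enters_first rW sWU (toR x0U) x0X.
have [n1 n1X /andP[n1t _]] := exists_inP x0t.
case: (boolP [exists n in X, arc n t && ~~ fE_nWk arc n W t]) => [/exists_inP[n nX /andP]|].
  by case=> nt fE; exists n, t.
rewrite negb_exists_in => /forall_inP fE1.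
have noPair n u : n \in X -> arc n t -> u \in IN arc [set t] [set n] ->
    u \notin IN arc [set t] (W :\ t).
  move=> nX nt uN; apply/negP => uW; have := fE1 n nX; rewrite nt /= negbK.
  by apply/negP/fE_nWkP; right; exists u.
have [w0 w0W] : exists w0, w0 \in W :\ t.
  apply/set0Pn/eqP => Wt; have := fE1 n1 n1X; rewrite n1t /= negbK.
  by apply/negP/fE_nWkP; left.
have step := enters_und_closed tW noPair.
have closedX : closed (und_arc arc (U :\ t)) [pred y | (y \in X) && enters X y t].
  move=> a b ab; apply/idP/idP => /andP[aX aE]; first exact: step ab.
  by apply: (step b a aX aE); rewrite und_arc_sym.
have x0Ut : x0 \in U :\ t.
  by rewrite in_setD1 x0U andbT; apply: contraTneq x0X => ->; rewrite inE tW.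
have w0Ut : w0 \in U :\ t by move: w0W; rewrite !in_setD1 => /andP[-> /(subsetP sWU)].
have := closed_connect closedX (und_connectedE (tcU t) x0Ut w0Ut).
rewrite [x0 \in _]inE [w0 \in _]inE /= x0X x0t => /esym/andP[w0X _].
by move: w0W w0X; rewrite !inE => /andP[_ ->].
Qed.

End Growth.

Lemma ME_grow (psi : state N) k n : ME arc psi -> k \in supp psi -> n \notin supp psi ->
  arc n k -> ~~ fE_nWk arc n (supp psi) k -> ME arc (addI n (hset Sus k psi)).
Proof.
move=> Mpsi kp np nk fE0; apply: (ME_step Mpsi); split; first exact: ME_no_R.
by apply: Or33; exists k, n; split => //; rewrite (negbTE fE0).
Qed.

Lemma supp_addI_hset (psi : state N) k n : k \in supp psi ->
  supp (addI n (hset Sus k psi)) = n |: supp psi.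
Proof.
by move=> kp; rewrite supp_addI supp_hset; congr (_ |: _); apply/setUidPr; rewrite sub1set.
Qed.

Lemma exists_ME_supp (U : {set V}) : weak_block U -> exists psi, ME arc psi /\ supp psi = U.
Proof.
case=> _ tcU /exists_inP[r rU /forall_inP toR].
suff grow d psi : #|U :\: supp psi| <= d -> ME arc psi -> r \in supp psi -> supp psi \subset U ->
    exists psi', ME arc psi' /\ supp psi' = U.
  by apply: (grow _ (single r Sus) (leqnn _) (ME_S _ _)); rewrite supp_single ?inE ?sub1set.
elim: d psi => [|d IHd] psi cd Mpsi rp sU.
  by exists psi; split => //; apply/eqP; rewrite eqEsubset sU -setD_eq0 -cards_eq0 -leqn0 cd.
have [UW|/set0Pn[x0 x0X]] := eqVneq (U :\: supp psi) set0.
  by exists psi; split => //; apply/eqP; rewrite eqEsubset sU -setD_eq0 UW eqxx.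
have [n [k [nX kp nk fE0]]] := exists_growth_arc tcU rp sU toR x0X.
have np : n \notin supp psi by move: nX; rewrite inE => /andP[].
apply: (IHd _ _ (ME_grow Mpsi kp np nk fE0)); rewrite supp_addI_hset //.
- rewrite -ltnS; apply: leq_trans cd; apply: proper_card; apply/properP; split.
    by apply: setDS; apply: subsetUr.
  by exists n => //; rewrite !inE eqxx.
- by rewrite inE rp orbT.
- by rewrite subUset sub1set sU andbT; move: nX; rewrite inE => /andP[].
Qed.

Lemma directed_subblock_weak_block (U : {set V}) :
  directed_subblock arc U <-> 2 < #|U| /\ weak_block U.
Proof.
split=> [/andP[rU /and3P[U3 cU /forall_inP bU]]|[U3 [_ tcU rU]]].
  split=> //; split=> //; first exact: ltnW.
  move=> x; have [xU|xNU] := boolP (x \in U); first exact: bU.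
  suff -> : U :\ x = U by [].
  by apply/setP => y; rewrite in_setD1; case: eqVneq => // ->; rewrite (negbTE xNU).
apply/andP; split=> //; apply/and3P; split=> //; last by apply/forall_inP => x _; apply: tcU.
apply/forall_inP => y yU; apply/forall_inP => z zU.
have /set0Pn[x] : U :\ y :\ z != set0.
  rewrite -card_gt0; move: U3; rewrite (cardsD1 y U) yU (cardsD1 z (U :\ y)).
  by case: (z \in U :\ y); case: #|_|.
rewrite !in_setD1 => /and3P[xz xy xU].
apply: (connect_und_sub (subsetDl U [set x])); apply: und_connectedE (tcU x) _ _;
  by rewrite in_setD1 ?yU ?zU andbT eq_sym.
Qed.

Lemma transmission_block_sup (U : {set V}) : directed_subblock arc U ->
  exists2 T, transmission_block arc T & U \subset T.
Proof.
case/(maxset_exists (P := directed_subblock arc)) => T /maxsetP[dT maxT] sUT.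
exists T => //; apply/andP; split=> //; apply/forall_inP => T' /properP[sTT' [x xT' xNT]].
by apply: contraNN xNT => /maxT/(_ sTT') <-.
Qed.

Lemma supp_ME_in_block (psi : state N) : ME arc psi ->
  #|supp psi| <= 2 \/ exists2 T, transmission_block arc T & supp psi \subset T.
Proof.
case/supp_ME_in_weak_block => [le1|[U bU sU]]; first by left; apply: leq_trans le1 _.
have [U2|U3] := leqP #|U| 2; first by left; apply: leq_trans (subset_leq_card sU) U2.
have [T tT sUT] := transmission_block_sup (proj2 (directed_subblock_weak_block U) (conj U3 bU)).
by right; exists T => //; apply: subset_trans sUT.
Qed.

End Blocks.

Theorem theorem4 (N : nat) (arc : rel 'I_N)
  (Hirr : forall i : 'I_N, ~~ arc i i)
  (Harc : exists i j : 'I_N, arc i j) :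
  let m := if [exists W : {set 'I_N}, transmission_block arc W]
           then \max_(W : {set 'I_N} | transmission_block arc W) #|W|
           else 2 in
  (exists psi : state N, ME arc psi /\ #|supp psi| = m) /\
  (forall psi : state N, ME arc psi -> #|supp psi| <= m).
Proof.
move=> m; have block_le T : transmission_block arc T -> #|T| <= m.
  move=> tT; rewrite /m; case: ifP => [_|/existsP[]]; last by exists T.
  exact: (leq_bigmax_cond (F := fun W : {set 'I_N} => #|W|) T tT).
have m_ge2 : 2 <= m.
  have [/existsP[T tT]|noT] := boolP [exists W, transmission_block arc W].
    by apply: leq_trans (ltnW _) (block_le T tT); case/andP: tT => /directed_subblock_weak_block[].
  by rewrite /m (negbTE noT).
split; last first.
  move=> psi /supp_ME_in_block[le2|[T tT sT]]; first exact: leq_trans le2 m_ge2.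
  exact: leq_trans (subset_leq_card sT) (block_le T tT).
rewrite /m; case: ifPn => [/existsP[T0 tT0]|_].
  have [|T tT ->] := eq_bigmax_cond (fun W : {set 'I_N} => #|W|) (A := transmission_block arc).
    by apply/card_gt0P; exists T0.
  case/andP: tT => /directed_subblock_weak_block[_ /exists_ME_supp[psi [Mpsi <-]]] _.
  by exists psi.
case: Harc => i [j ij]; have ji : i != j by apply: contraNneq (Hirr i) => {2}->.
have [psi [Mpsi sp]] := exists_ME_supp (weak_block_arc ij ji).
by exists psi; rewrite sp cards2 eq_sym ji.
Qed.
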